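(* Let $\rho$ be a representation of $D^{2,2,2}$, let $\{i,j,k\}=\{1,2,3\}$, and let $n\ge1$. Then: 1. $\psi_i(a^{ij}_n)=\nu^0(y_iA^{kj}_n)$; 2. $\psi_j(a^{ij}_n)=\nu^0(y_jA^{kj}_n)$ for $n>1$, and $\psi_j(a^{ij}_1)=\nu^0(y_j(y_i+y_k)A^{kj}_1)$; 3. $\psi_k(y_ia^{ij}_n)=\nu^0(y_kA^{ji}_{n+1})$; 4. $\psi_i(A^{ij}_n)=\nu^0(y_i(y_j+y_k)a^{ik}_n)$; 5. $\psi_j(y_kA^{ij}_n)=\nu^0(y_j(x_k+y_i)a^{ik}_n)$; 6. $\psi_k(y_jA^{ij}_n)=\nu^0(y_ka^{ji}_{n+1})$.
   Context: $D^{2,2,2}$ is the modular lattice generated by $x_1,y_1,x_2,y_2,x_3,y_3$ subject only to $x_i\subseteq y_i$ ($i=1,2,3$), with a greatest element $I$ adjoined. Meet is written $ab$, join $a+b$. Atomic elements: for distinct $i,j$, let $k$ denote the third index. Define - $a^{ij}_0=I$ and $a^{ij}_n=x_i+y_ja^{jk}_{n-1}$ for $n\ge1$; - $A^{ij}_0=I$ and $A^{ij}_n=y_i+x_jA^{ki}_{n-1}$ for $n\ge1$. A representation $\rho$ of $D^{2,2,2}$ in a finite-dimensional vector space $X_0$ is a lattice morphism from $D^{2,2,2}$ to the subspace lattice of $X_0$, with $\rho(I)=X_0$. Write $X_i=\rho(x_i)\subseteq Y_i=\rho(y_i)$. Put $R=Y_1\oplus Y_2\oplus Y_3$ and $X^1_0=\{(\eta_1,\eta_2,\eta_3)\in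 R:\sum\eta_i=0\}$. Define subspaces of $R$: - $G_i$: triples with $i$-th coordinate in $Y_i$ and the others $0$; - $H_i$: triples with $i$-th coordinate in $X_i$ and the others $0$; - $G'_i$: triples with $i$-th coordinate in $X_i$; - $H'_i$: triples with $i$-th coordinate $0$. $\Phi^+\rho$ is the representation in $X^1_0$ with $\Phi^+\rho(y_i)=G'_i\cap X^1_0$, $\Phi^+\rho(x_i)=H'_i\cap X^1_0$, $\Phi^+\rho(I)=X^1_0$. Set $\nu^1(a)=\Phi^+\rho(a)\subseteq R$. $\nu^0$ is the representation in $R$ with $\nu^0(y_i)=X^1_0+G_i$, $\nu^0(x_i)=X^1_0+H_i$, $\nu^0(I)=R$. The joint map is $\psi_i(a)=X^1_0+G_i\cap(H'_i+\nu^1(a))$. *)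

From HB Require Import structures.
From mathcomp Require Import all_boot all_order all_algebra.
Set Implicit Arguments. Unset Strict Implicit. Unset Printing Implicit Defensive.
Import GRing.Theory.
Local Open Scope ring_scope.

(* Lattice terms over the generators x_i, y_i (i : 'I_3, indices 1,2,3 of the
   paper are 0,1,2 here) and the adjoined top I.  A representation of
   D^{2,2,2} is determined by the images of generators; evaluating a term
   gives the image of the element of D^{2,2,2} it denotes. *)
Inductive lterm : Type :=
| Tx of 'I_3
| Ty of 'I_3
| TI
| Tmeet of lterm & lterm
| Tjoin of lterm & lterm.

Definition third (i j : 'I_3) : 'I_3 := inord (3 - i - j).

Fixpoint at_a (n : nat) (i j : 'I_3) : lterm :=
  match n with
  | 0 => TI
  | m.+1 => Tjoin (Tx i) (Tmeet (Ty j) (at_a m j (third i j)))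
  end.

Fixpoint at_A (n : nat) (i j : 'I_3) : lterm :=
  match n with
  | 0 => TI
  | m.+1 => Tjoin (Ty i) (Tmeet (Tx j) (at_A m (third i j) i))
  end.

Section Rep.
Variables (K : fieldType) (vT : vectType K).

Fixpoint eval_rep (gx gy : 'I_3 -> {vspace vT}) (top : {vspace vT}) (t : lterm)
  : {vspace vT} :=
  match t with
  | Tx i => gx i
  | Ty i => gy i
  | TI => top
  | Tmeet a b => (eval_rep gx gy top a :&: eval_rep gx gy top b)%VS
  | Tjoin a b => (eval_rep gx gy top a + eval_rep gx gy top b)%VS
  end.
End Rep.

Section Construction.
Variables (K : fieldType) (vT : vectType K).
(* X_0 is the whole space vT; X i = rho(x_i), Y i = rho(y_i). *)
Variables (X Y : 'I_3 -> {vspace vT}).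

Local Notation V3 := {ffun 'I_3 -> vT}.

Definition coord (i : 'I_3) : 'Hom(V3, vT) := linfun (fun f : V3 => f i).
Definition inj (i : 'I_3) : 'Hom(vT, V3) :=
  linfun (fun v : vT => [ffun j => if j == i then v else 0] : V3).
Definition sumc : 'Hom(V3, vT) := linfun (fun f : V3 => \sum_i f i).

(* R = Y_1 (+) Y_2 (+) Y_3, as a subspace of vT^3 *)
Definition Rsp : {vspace V3} := (\bigcap_i (coord i @^-1: Y i))%VS.
Definition X10 : {vspace V3} := (Rsp :&: lker sumc)%VS.
Definition Gsp (i : 'I_3) : {vspace V3} := (inj i @: Y i)%VS.
Definition Hsp (i : 'I_3) : {vspace V3} := (inj i @: X i)%VS.
Definition G'sp (i : 'I_3) : {vspace V3} := (Rsp :&: (coord i @^-1: X i))%VS.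
Definition H'sp (i : 'I_3) : {vspace V3} := (Rsp :&: lker (coord i))%VS.

Definition rho (t : lterm) : {vspace vT} := eval_rep X Y fullv t.
Definition nu1 (t : lterm) : {vspace V3} :=
  eval_rep (fun i => H'sp i :&: X10)%VS (fun i => G'sp i :&: X10)%VS X10 t.
Definition nu0 (t : lterm) : {vspace V3} :=
  eval_rep (fun i => X10 + Hsp i)%VS (fun i => X10 + Gsp i)%VS Rsp t.

Definition psi (i : 'I_3) (t : lterm) : {vspace V3} :=
  (X10 + (Gsp i :&: (H'sp i + nu1 t)))%VS.
End Construction.

From Pilot Require Import Defs.
From HB Require Import structures.
From mathcomp Require Import all_boot all_order all_algebra.
Set Implicit Arguments. Unset Strict Implicit. Unset Printing Implicit Defensive.
Import GRing.Theory.
Local Open Scope ring_scope.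

(* Both sides of each identity are preimages under the summation map
   R -> Y_1 + Y_2 + Y_3.  On the right, nu^0 of a lattice term is the preimage
   of its rho-image; on the left, psi_i(a) is the preimage of the i-th
   coordinate projection of nu^1(a).  By induction on n, nu^1(a^{ij}_n) and
   nu^1(A^{ij}_n) are the triples of X^1_0 whose i-th coordinate lies in
   rho(A^{kj}_n), resp. rho(a^{ik}_n).  Projecting such sets of triples on a
   coordinate is computed explicitly, and the six identities reduce to the
   modular law in the subspace lattice of X_0. *)

Lemma thirdE (i j k : 'I_3) : i != j -> j != k -> i != k -> third i j = k.
Proof.
move: i j k => [[|[|[|//]]] ?] [[|[|[|//]]] ?] [[|[|[|//]]] ?] //= _ _ _;
  by apply/val_inj; rewrite /third /= inordK.
Qed.

Lemma third_neq (i j : 'I_3) : i != j -> (i != third i j) && (j != third i j).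
Proof.
move: i j => [[|[|[|//]]] ?] [[|[|[|//]]] ?] //= _;
  by rewrite /third /eq_op /= inordK.
Qed.

Lemma ord3_cases (i j k l : 'I_3) : i != j -> j != k -> i != k ->
  [|| l == i, l == j | l == k].
Proof.
by move: i j k l => [[|[|[|//]]] ?] [[|[|[|//]]] ?] [[|[|[|//]]] ?] [[|[|[|//]]] ?].
Qed.

Lemma big_ord3 (V : zmodType) (f : 'I_3 -> V) (i j k : 'I_3) :
  i != j -> j != k -> i != k -> \sum_l f l = f i + f j + f k.
Proof.
move=> hij hjk hik.
rewrite (bigD1 i) //= (bigD1 j) 1?eq_sym //= (bigD1 k) /=; last first.
  by rewrite !(eq_sym k) hik hjk.
rewrite big_pred0 ?addr0 ?addrA // => l.
by case/or3P: (ord3_cases l hij hjk hik) => /eqP->; rewrite ?eqxx ?andbF.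
Qed.

Section Construction.
Variables (K : fieldType) (vT : vectType K) (X Y : 'I_3 -> {vspace vT}).
Hypothesis XsubY : forall i, (X i <= Y i)%VS.

Local Notation V3 := {ffun 'I_3 -> vT}.
Local Notation coord := (Defs.coord vT).
Local Notation inj := (Defs.inj vT).
Local Notation sumc := (Defs.sumc vT).
Local Notation R := (Rsp Y).
Local Notation X10 := (X10 Y).
Local Notation nu0 := (nu0 X Y).
Local Notation nu1 := (nu1 X Y).

Definition coord_fun (i : 'I_3) (f : V3) : vT := f i.
Fact coord_fun_is_linear i : linear (coord_fun i).
Proof. by move=> a f g; rewrite /coord_fun !ffunE. Qed.
HB.instance Definition _ i :=
  GRing.isLinear.Build K V3 vT *:%R (coord_fun i) (coord_fun_is_linear i).

Definition inj_fun (i : 'I_3) (v : vT) : V3 := [ffun l => if l == i then v else 0].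
Fact inj_fun_is_linear i : linear (inj_fun i).
Proof.
move=> a u v; apply/ffunP => l; rewrite !ffunE.
by case: eqP; rewrite ?scaler0 ?addr0.
Qed.
HB.instance Definition _ i :=
  GRing.isLinear.Build K vT V3 *:%R (inj_fun i) (inj_fun_is_linear i).

Definition sum_fun (f : V3) : vT := \sum_l f l.
Fact sum_fun_is_linear : linear sum_fun.
Proof.
move=> a f g; rewrite /sum_fun scaler_sumr -big_split.
by apply: eq_bigr => l _; rewrite !ffunE.
Qed.
HB.instance Definition _ :=
  GRing.isLinear.Build K V3 vT *:%R sum_fun sum_fun_is_linear.

Lemma coordE i (f : V3) : coord i f = f i.
Proof. exact: (lfunE (coord_fun i) f). Qed.

Lemma injE i v l : (inj i v : V3) l = if l == i then v else 0.
Proof. by rewrite (lfunE (inj_fun i) v) ffunE. Qed.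

Lemma inj_id i v : (inj i v : V3) i = v.
Proof. by rewrite injE eqxx. Qed.

Lemma sumcE (f : V3) : sumc f = \sum_l f l.
Proof. exact: (lfunE sum_fun f). Qed.

Lemma sum_inj i v : \sum_l (inj i v : V3) l = v.
Proof.
rewrite (bigD1 i) //= inj_id big1 ?addr0 // => l /negbTE hl.
by rewrite injE hl.
Qed.

Lemma sum_ffunB (f g : V3) : \sum_l (f - g) l = \sum_l f l - \sum_l g l.
Proof. by rewrite -sumrB; apply: eq_bigr => l _; rewrite !ffunE. Qed.

Lemma memv_Rsp (f : V3) : (f \in R) = [forall l, f l \in Y l].
Proof.
rewrite memvE; apply/subv_bigcapP/forallP => hf l.
  by move: (hf l isT); rewrite -memvE -memv_preim coordE.
by move=> _; rewrite -memvE -memv_preim coordE.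
Qed.

Lemma Rsp_coord (f : V3) l : f \in R -> f l \in Y l.
Proof. by rewrite memv_Rsp => /forallP. Qed.

Lemma inj_Rsp i v : v \in Y i -> (inj i v : V3) \in R.
Proof.
move=> hv; rewrite memv_Rsp; apply/forallP => l; rewrite injE.
by case: eqP => [->|_] //; rewrite mem0v.
Qed.

Lemma memv_X10 (f : V3) : (f \in X10) = (f \in R) && (\sum_l f l == 0).
Proof. by rewrite memv_cap memv_ker sumcE. Qed.

Lemma X10_sub_Rsp : (X10 <= R)%VS.
Proof. exact: capvSl. Qed.

Definition spanY : {vspace vT} := (\sum_l Y l)%VS.

(* rho with I interpreted as Y_1 + Y_2 + Y_3, the image of R under
   summation: nu^0 cannot see anything outside it. *)
Definition rhoY (t : lterm) : {vspace vT} := eval_rep X Y spanY t.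

Lemma rhoY_x l : rhoY (Tx l) = X l. Proof. by []. Qed.

Lemma rhoY_y l : rhoY (Ty l) = Y l. Proof. by []. Qed.

Lemma rhoY_meet a b : rhoY (Tmeet a b) = (rhoY a :&: rhoY b)%VS.
Proof. by []. Qed.

Lemma rhoY_join a b : rhoY (Tjoin a b) = (rhoY a + rhoY b)%VS.
Proof. by []. Qed.

Lemma Y_sub_spanY l : (Y l <= spanY)%VS.
Proof. exact: sumv_sup. Qed.

Lemma rhoY_sub_spanY t : (rhoY t <= spanY)%VS.
Proof.
elim: t => [l|l||a ha b hb|a ha b hb] /=; rewrite ?Y_sub_spanY ?subvv //.
- exact: subv_trans (XsubY l) (Y_sub_spanY l).
- exact: subv_trans (capvSl _ _) ha.
- by rewrite subv_add ha hb.
Qed.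

Lemma X_sub_rhoY_at_a m i j : (X i <= rhoY (at_a m i j))%VS.
Proof.
case: m => [|m] /=; last exact: addvSl.
exact: subv_trans (XsubY i) (Y_sub_spanY i).
Qed.

Lemma rhoY_at_A_sub m i j : (rhoY (at_A m.+1 i j) <= Y i + Y j)%VS.
Proof.
rewrite /= subv_add addvSl.
exact: subv_trans (capvSl _ _) (subv_trans (XsubY j) (addvSr _ _)).
Qed.

Definition preim_sum (U : {vspace vT}) : {vspace V3} := (R :&: sumc @^-1: U)%VS.

Lemma memv_preim_sum U (f : V3) : (f \in preim_sum U) = (f \in R) && (\sum_l f l \in U).
Proof. by rewrite memv_cap -memv_preim sumcE. Qed.

Lemma preim_sumS U U' : (U <= U')%VS -> (preim_sum U <= preim_sum U')%VS.
Proof.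
move=> hU; apply/subvP => f; rewrite !memv_preim_sum => /andP[-> hf].
exact: (subvP hU).
Qed.

Lemma preim_sumI U U' : preim_sum (U :&: U') = (preim_sum U :&: preim_sum U')%VS.
Proof.
apply/vspaceP => f; rewrite memv_cap !memv_preim_sum memv_cap.
by case: (f \in R).
Qed.

Lemma preim_sumD U U' :
  (U <= spanY)%VS -> preim_sum (U + U') = (preim_sum U + preim_sum U')%VS.
Proof.
move=> hU; apply/subv_anti/andP; split; last first.
  by rewrite subv_add !preim_sumS ?addvSl ?addvSr.
apply/subvP => f; rewrite memv_preim_sum => /andP[hf /memv_addP[u hu [v hv Ef]]].
have /memv_sumP[us hus Eu] : u \in spanY by apply: (subvP hU).
pose g : V3 := [ffun l => us l].
have hg : g \in R by rewrite memv_Rsp; apply/forallP => l; rewrite ffunE hus.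
have Sg : \sum_l g l = u by rewrite Eu; apply: eq_bigr => l _; rewrite ffunE.
rewrite -(subrK g f) addrC; apply: memv_add; first by rewrite memv_preim_sum hg Sg.
by rewrite memv_preim_sum memvB //= sum_ffunB Ef Sg addrC addKr.
Qed.

Lemma X10_sub_preim_sum U : (X10 <= preim_sum U)%VS.
Proof.
apply/subvP => f; rewrite memv_X10 memv_preim_sum => /andP[-> /eqP->].
exact: mem0v.
Qed.

(* A triple f of R differs from [inj l (\sum f)] by an element of X^1_0. *)
Lemma X10_add_inj_preim_sum l U : (U <= Y l)%VS ->
  (X10 + (inj l @: U))%VS = preim_sum U.
Proof.
move=> hU; apply/subv_anti/andP; split.
  rewrite subv_add X10_sub_preim_sum; apply/subvP => f /memv_imgP[u hu ->].
  by rewrite memv_preim_sum inj_Rsp ?sum_inj // (subvP hU).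
apply/subvP => f; rewrite memv_preim_sum => /andP[hf hs].
rewrite -(subrK (inj l (\sum_i f i)) f); apply: memv_add; last exact: memv_img.
by rewrite memv_X10 memvB ?inj_Rsp ?(subvP hU) //= sum_ffunB sum_inj subrr.
Qed.

Lemma nu0E t : nu0 t = preim_sum (rhoY t).
Proof.
elim: t => [l|l||a ha b hb|a ha b hb].
- exact: X10_add_inj_preim_sum.
- exact: X10_add_inj_preim_sum.
- apply/vspaceP => f /=; rewrite memv_preim_sum.
  by case hf: (f \in R) => //=; apply/esym/memv_sumr => l _; apply: Rsp_coord.
- by rewrite rhoY_meet preim_sumI -ha -hb.
- by rewrite rhoY_join preim_sumD ?rhoY_sub_spanY -?ha -?hb.
Qed.

Definition preim_coord (i : 'I_3) (U : {vspace vT}) : {vspace V3} :=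
  (X10 :&: coord i @^-1: U)%VS.

Lemma memv_preim_coord i U f : (f \in preim_coord i U) = (f \in X10) && (f i \in U).
Proof. by rewrite memv_cap -memv_preim coordE. Qed.

Lemma preim_coord_sub i U : (preim_coord i U <= X10)%VS.
Proof. exact: capvSl. Qed.

Lemma preim_coord_capY i U : preim_coord i U = preim_coord i (U :&: Y i).
Proof.
apply/vspaceP => f; rewrite !memv_preim_coord memv_cap.
case hf: (f \in X10) => //=.
by rewrite Rsp_coord ?andbT // (subvP X10_sub_Rsp).
Qed.

Lemma preim_coordI i U U' :
  (preim_coord i U :&: preim_coord i U')%VS = preim_coord i (U :&: U').
Proof.
apply/vspaceP => f; rewrite memv_cap !memv_preim_coord memv_cap.
by case: (f \in X10).
Qed.

Lemma preim_coord_full i U : (Y i <= U)%VS -> preim_coord i U = X10.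
Proof.
move=> hU; apply/vspaceP => f; rewrite memv_preim_coord.
case hf: (f \in X10) => //=; apply: (subvP hU).
by rewrite Rsp_coord // (subvP X10_sub_Rsp).
Qed.

Lemma preim_coordD i U W : (W <= X10)%VS ->
  (preim_coord i U + W)%VS = preim_coord i (U + coord i @: W).
Proof.
move=> hW; apply/subv_anti/andP; split.
  rewrite subv_add; apply/andP; split; apply/subvP => f.
    rewrite !memv_preim_coord => /andP[-> hu] /=.
    by rewrite -[f i]addr0 memv_add ?mem0v.
  move=> hf; rewrite memv_preim_coord (subvP hW) //= -coordE.
  by rewrite -[coord i f]add0r memv_add ?mem0v ?memv_img.
apply/subvP => f; rewrite memv_preim_coord.
case/andP=> hf /memv_addP[u hu [w /memv_imgP[g hg ->] Ef]].
have -> : f = (f - g) + g by rewrite subrK.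
apply: memv_add => //.
rewrite memv_preim_coord memvB // ?(subvP hW) //=.
by rewrite !ffunE Ef coordE addrK.
Qed.

Lemma nu1_meet a b : nu1 (Tmeet a b) = (nu1 a :&: nu1 b)%VS.
Proof. by []. Qed.

Lemma nu1_join a b : nu1 (Tjoin a b) = (nu1 a + nu1 b)%VS.
Proof. by []. Qed.

Lemma nu1_x i : nu1 (Tx i) = preim_coord i 0.
Proof.
apply/vspaceP => f /=; rewrite memv_cap memv_preim_coord memv_cap memv_ker coordE memv0.
case hf: (f \in X10); rewrite ?andbF ?andbT //=.
by rewrite (subvP X10_sub_Rsp).
Qed.

Lemma nu1_y i : nu1 (Ty i) = preim_coord i (X i).
Proof.
apply/vspaceP => f /=; rewrite memv_cap memv_preim_coord memv_cap -memv_preim coordE.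
case hf: (f \in X10); rewrite ?andbF ?andbT //=.
by rewrite (subvP X10_sub_Rsp).
Qed.

Lemma nu1_sub_X10 t : (nu1 t <= X10)%VS.
Proof.
elim: t => [l|l||a ha b hb|a ha b hb] /=; rewrite ?capvSr ?subvv //.
  exact: subv_trans (capvSl _ _) ha.
by rewrite subv_add ha hb.
Qed.

Lemma psiE i t : psi X Y i t = preim_sum (coord i @: nu1 t).
Proof.
have hN := nu1_sub_X10 t.
apply/subv_anti/andP; split.
  rewrite subv_add X10_sub_preim_sum /=; apply/subvP => f.
  case/memv_capP=> /memv_imgP[y hy ->] /memv_addP[h hh [w hw Ef]].
  rewrite memv_preim_sum inj_Rsp //= sum_inj.
  have /(congr1 (fun g : V3 => g i)) := Ef; rewrite inj_id ffunE => ->.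
  move: hh; rewrite memv_cap memv_ker coordE => /andP[_ /eqP->].
  by rewrite add0r -coordE memv_img.
apply/subvP => f; rewrite memv_preim_sum => /andP[hf /memv_imgP[w hw Ew]].
have hwX : w \in X10 by apply: (subvP hN).
have hwi : w i \in Y i by apply: Rsp_coord; rewrite (subvP X10_sub_Rsp).
rewrite -(subrK (inj i (w i)) f); apply: memv_add.
  by rewrite memv_X10 memvB ?inj_Rsp //= sum_ffunB sum_inj Ew coordE subrr.
apply/memv_capP; split; first exact: memv_img.
rewrite -(subrK w (inj i (w i))); apply: memv_add => //.
rewrite memv_cap memv_ker coordE !ffunE inj_id subrr eqxx andbT.
by rewrite memvB ?inj_Rsp ?(subvP X10_sub_Rsp).
Qed.

Section Distinct.
Variables (i j k : 'I_3).
Hypotheses (hij : i != j) (hjk : j != k) (hik : i != k).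

Definition ffun3 (a b c : vT) : V3 :=
  [ffun l => if l == i then a else if l == j then b else c].

Lemma ffun3_i a b c : ffun3 a b c i = a.
Proof. by rewrite ffunE eqxx. Qed.

Lemma ffun3_j a b c : ffun3 a b c j = b.
Proof. by rewrite ffunE eq_sym (negbTE hij) eqxx. Qed.

Lemma ffun3_k a b c : ffun3 a b c k = c.
Proof. by rewrite ffunE eq_sym (negbTE hik) eq_sym (negbTE hjk). Qed.

Lemma memv_X10_3 (f : V3) : (f \in X10) =
  [&& f i \in Y i, f j \in Y j, f k \in Y k & f i + f j + f k == 0].
Proof.
rewrite memv_X10 memv_Rsp (big_ord3 f hij hjk hik).
apply/idP/idP => [/andP[/forallP hf ->]|/and4P[? ? ? ->]]; rewrite ?hf ?andbT //.
by apply/forallP => l; case/or3P: (ord3_cases l hij hjk hik) => /eqP->.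
Qed.

Lemma ffun3_X10 a b c : a \in Y i -> b \in Y j -> c \in Y k -> a + b + c = 0 ->
  ffun3 a b c \in X10.
Proof. by move=> ha hb hc h; rewrite memv_X10_3 ffun3_i ffun3_j ffun3_k ha hb hc h eqxx. Qed.

Lemma X10_coord_i (f : V3) : f \in X10 -> f i = - (f j + f k).
Proof. by rewrite memv_X10_3 => /and4P[_ _ _]; rewrite -addrA addr_eq0 => /eqP. Qed.

Lemma coord_preim_coord2 U U' :
  (coord i @: (preim_coord j U :&: preim_coord k U'))%VS =
  (Y i :&: (U :&: Y j + U' :&: Y k))%VS.
Proof.
apply/vspaceP => w; apply/memv_imgP/idP.
  case=> f /memv_capP[]; rewrite !memv_preim_coord => /andP[hf hu] /andP[_ hu'] ->.
  have := hf; rewrite memv_X10_3 => /and4P[hi hj hk _].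
  rewrite coordE memv_cap hi (X10_coord_i hf) memvN.
  by apply: memv_add; rewrite memv_cap ?hu ?hu' ?hj ?hk.
case/memv_capP=> hw /memv_addP[u hu [u' hu' Ew]].
move: hu hu'; rewrite !memv_cap => /andP[hu huY] /andP[hu' hu'Y].
exists (ffun3 w (- u) (- u')); last by rewrite coordE ffun3_i.
rewrite memv_cap !memv_preim_coord ffun3_j ffun3_k !memvN hu hu' !andbT andbb.
by apply: ffun3_X10; rewrite ?memvN // -addrA -opprD Ew subrr.
Qed.

Lemma coord_preim_coord_self U :
  (coord i @: preim_coord i U)%VS = (U :&: Y i :&: (Y j + Y k))%VS.
Proof.
apply/vspaceP => w; apply/memv_imgP/idP.
  case=> f; rewrite memv_preim_coord => /andP[hf hu] ->.
  have := hf; rewrite memv_X10_3 => /and4P[hi hj hk _].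
  by rewrite coordE !memv_cap hu hi (X10_coord_i hf) memvN memv_add.
case/memv_capP=> /memv_capP[hwU hw] /memv_addP[u hu [u' hu' Ew]].
exists (ffun3 w (- u) (- u')); last by rewrite coordE ffun3_i.
rewrite memv_preim_coord ffun3_i hwU andbT.
by apply: ffun3_X10; rewrite ?memvN // -addrA -opprD Ew subrr.
Qed.

Lemma coord_preim_coord U :
  (coord i @: preim_coord j U)%VS = (Y i :&: (U :&: Y j + Y k))%VS.
Proof.
have <- : (preim_coord j U :&: preim_coord k fullv)%VS = preim_coord j U.
  by rewrite (preim_coord_full (subvf _)); apply/capv_idPl/preim_coord_sub.
by rewrite coord_preim_coord2 (capvC fullv) capvf.
Qed.

End Distinct.

Lemma nu1_at_a n i j : i != j ->
  nu1 (at_a n i j) = preim_coord i (rhoY (at_A n (third i j) j)).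
Proof.
elim: n i j => [|n IH] i j hij /=; first by rewrite preim_coord_full ?Y_sub_spanY.
have /andP[hik hjk] := third_neq hij; set k := third i j in hik hjk *.
rewrite nu1_join nu1_meet nu1_x nu1_y IH //.
have -> : third j k = i by apply: thirdE; rewrite // eq_sym.
have -> : third k j = i by apply: thirdE; rewrite // eq_sym.
rewrite preim_coordI preim_coordD ?preim_coord_sub // add0v.
rewrite rhoY_join rhoY_meet rhoY_x rhoY_y.
rewrite (coord_preim_coord (k := k)) // preim_coord_capY [RHS]preim_coord_capY.
rewrite (capv_idPl (subv_trans (capvSl _ _) (XsubY j))).
by rewrite capvC capvA capvv addvC capvC.
Qed.

Lemma nu1_at_A n i j : i != j ->
  nu1 (at_A n i j) = preim_coord i (rhoY (at_a n i (third i j))).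
Proof.
elim: n i j => [|n IH] i j hij /=; first by rewrite preim_coord_full ?Y_sub_spanY.
have /andP[hik hjk] := third_neq hij; set k := third i j in hik hjk *.
rewrite nu1_join nu1_meet nu1_x nu1_y IH 1?eq_sym //.
have -> : third k i = j by apply: thirdE; rewrite // eq_sym.
have -> : third i k = j by apply: thirdE; rewrite // eq_sym.
rewrite rhoY_join rhoY_meet rhoY_x rhoY_y preim_coordD; last first.
  exact: subv_trans (capvSl _ _) (preim_coord_sub _ _).
rewrite coord_preim_coord2 // ?(eq_sym j) // cap0v add0v.
rewrite preim_coord_capY [RHS]preim_coord_capY.
rewrite (capvC (Y i)) (vspace_modl _ (XsubY i)) -capvA capvv.
by rewrite (capvC (Y k)).
Qed.

Section Identities.
Variables (i j k : 'I_3).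
Hypotheses (hij : i != j) (hjk : j != k) (hik : i != k).

Let hji : j != i. Proof. by rewrite eq_sym. Qed.
Let hkj : k != j. Proof. by rewrite eq_sym. Qed.
Let hki : k != i. Proof. by rewrite eq_sym. Qed.
Let tij : third i j = k. Proof. exact: thirdE. Qed.
Let tji : third j i = k. Proof. exact: thirdE. Qed.
Let tkj : third k j = i. Proof. exact: thirdE. Qed.

Lemma psi_i_at_a n : psi X Y i (at_a n.+1 i j) = nu0 (Tmeet (Ty i) (at_A n.+1 k j)).
Proof.
rewrite psiE nu0E nu1_at_a // tij (@coord_preim_coord_self i j k) //.
rewrite (addvC (Y j)) (capv_idPl (subv_trans (capvSl _ _) (rhoY_at_A_sub _ _ _))).
by rewrite capvC.
Qed.

Lemma psi_j_at_a1 : psi X Y j (at_a 1 i j) =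
  nu0 (Tmeet (Ty j) (Tmeet (Tjoin (Ty i) (Ty k)) (at_A 1 k j))).
Proof.
rewrite psiE nu0E nu1_at_a // tij (coord_preim_coord (k := k)) // [at_A 1 k j]/=.
rewrite !(rhoY_meet, rhoY_join, rhoY_x, rhoY_y).
by rewrite vspace_modr ?addvSl // (capvC (Y i + Y k)%VS).
Qed.

Lemma psi_j_at_a n : psi X Y j (at_a n.+2 i j) = nu0 (Tmeet (Ty j) (at_A n.+2 k j)).
Proof.
rewrite psiE nu0E nu1_at_a // tij (coord_preim_coord (k := k)) // [at_A n.+2 k j]/= tkj.
rewrite !(rhoY_meet, rhoY_join, rhoY_x, rhoY_y) vspace_modr ?addvSl //.
congr (preim_sum (Y j :&: _)); apply/capv_idPl.
by rewrite subv_add addvSr (subv_trans (capvSr _ _) (rhoY_at_A_sub _ _ _)).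
Qed.

Lemma psi_k_Yi_at_a n : psi X Y k (Tmeet (Ty i) (at_a n i j)) =
  nu0 (Tmeet (Ty k) (at_A n.+1 j i)).
Proof.
rewrite psiE nu0E nu1_meet nu1_y nu1_at_a // tij preim_coordI.
rewrite (coord_preim_coord (k := j)) // [at_A n.+1 j i]/= tji.
rewrite !(rhoY_meet, rhoY_join, rhoY_x, rhoY_y).
by rewrite (capv_idPl (subv_trans (capvSl _ _) (XsubY i))) addvC.
Qed.

Lemma psi_i_at_A n : psi X Y i (at_A n i j) =
  nu0 (Tmeet (Ty i) (Tmeet (Tjoin (Ty j) (Ty k)) (at_a n i k))).
Proof.
rewrite psiE nu0E nu1_at_A // tij (@coord_preim_coord_self i j k) //.
rewrite !(rhoY_meet, rhoY_join, rhoY_y).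
by rewrite (capvC (rhoY _) (Y i)) -capvA (capvC (rhoY _)).
Qed.

Lemma psi_j_Yk_at_A n : psi X Y j (Tmeet (Ty k) (at_A n.+1 i j)) =
  nu0 (Tmeet (Ty j) (Tmeet (Tjoin (Tx k) (Ty i)) (at_a n.+1 i k))).
Proof.
rewrite psiE nu0E nu1_meet nu1_y nu1_at_A // tij coord_preim_coord2 //.
rewrite !(rhoY_meet, rhoY_join, rhoY_x, rhoY_y).
rewrite (capv_idPl (XsubY k)) (capvC _ (Y i)) vspace_modl //=.
by apply: subv_trans (addvSr (X i) _); rewrite subv_cap XsubY X_sub_rhoY_at_a.
Qed.

Lemma psi_k_Yj_at_A n : psi X Y k (Tmeet (Ty j) (at_A n i j)) =
  nu0 (Tmeet (Ty k) (at_a n.+1 j i)).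
Proof.
rewrite psiE nu0E nu1_meet nu1_y nu1_at_A // tij coord_preim_coord2 //.
rewrite [at_a n.+1 j i]/= tji !(rhoY_meet, rhoY_join, rhoY_x, rhoY_y).
by rewrite (capv_idPl (XsubY j)) (capvC _ (Y i)).
Qed.
End Identities.
End Construction.

Theorem mainTheorem9 (K : fieldType) (vT : vectType K)
  (X Y : 'I_3 -> {vspace vT}) (hXY : forall i, (X i <= Y i)%VS)
  (i j k : 'I_3) (hij : i != j) (hjk : j != k) (hik : i != k)
  (n : nat) (hn : (1 <= n)%N) :
  psi X Y i (at_a n i j) = nu0 X Y (Tmeet (Ty i) (at_A n k j))
   /\ ((1 < n)%N -> psi X Y j (at_a n i j) = nu0 X Y (Tmeet (Ty j) (at_A n k j)))
   /\ psi X Y j (at_a 1 i j) =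
        nu0 X Y (Tmeet (Ty j) (Tmeet (Tjoin (Ty i) (Ty k)) (at_A 1 k j)))
   /\ psi X Y k (Tmeet (Ty i) (at_a n i j)) = nu0 X Y (Tmeet (Ty k) (at_A n.+1 j i))
   /\ psi X Y i (at_A n i j) =
        nu0 X Y (Tmeet (Ty i) (Tmeet (Tjoin (Ty j) (Ty k)) (at_a n i k)))
   /\ psi X Y j (Tmeet (Ty k) (at_A n i j)) =
        nu0 X Y (Tmeet (Ty j) (Tmeet (Tjoin (Tx k) (Ty i)) (at_a n i k)))
   /\ psi X Y k (Tmeet (Ty j) (at_A n i j)) = nu0 X Y (Tmeet (Ty k) (at_a n.+1 j i)).
Proof.
case: n hn => [//|m] _.
split; first exact: psi_i_at_a.
split; first by case: m => [//|m] _; apply: psi_j_at_a.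
split; first exact: psi_j_at_a1.
split; first exact: psi_k_Yi_at_a.
split; first exact: psi_i_at_A.
split; first exact: psi_j_Yk_at_A.
exact: psi_k_Yj_at_A.
Qed.
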